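(* For an ordered triple $(p,q,r)$ of integers the following are equivalent: (1) $r\ge\min(p-1,q)$, with equality holding unless $p=q$; (2) $q\ge\min(p,r)$, with equality holding unless $p=r+1$; (3) $p\ge\min(q,r+1)$, with equality holding unless $q=r$; (4) all three inequalities $p\ge\min(q,r+1)$, $q\ge\min(p,r)$, $r\ge\min(p-1,q)$ hold. *)

From Stdlib Require Export ZArith Lia.
Open Scope Z_scope.

Definition cond1 (p q r : Z) : Prop :=
  r >= Z.min (p - 1) q /\ (p <> q -> r = Z.min (p - 1) q).
Definition cond2 (p q r : Z) : Prop :=
  q >= Z.min p r /\ (p <> r + 1 -> q = Z.min p r).
Definition cond3 (p q r : Z) : Prop :=
  p >= Z.min q (r + 1) /\ (q <> r -> p = Z.min q (r + 1)).
Definition cond4 (p q r : Z) : Prop :=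
  p >= Z.min q (r + 1) /\ q >= Z.min p r /\ r >= Z.min (p - 1) q.

From Stdlib Require Import ZArith.
Open Scope Z_scope.

(* Each of the four conditions cuts out the same explicit set of triples:
   comparing p with q, one gets r = q when p > q, r = p - 1 when p < q, and
   only the inequality r >= p - 1 when p = q. *)

Definition cond_explicit (p q r : Z) : Prop :=
  (q < p /\ r = q) \/ (p = q /\ p - 1 <= r) \/ (p < q /\ r = p - 1).

Lemma cond1_explicit (p q r : Z) : cond1 p q r <-> cond_explicit p q r.
Proof. unfold cond1, cond_explicit; lia. Qed.

Lemma cond2_explicit (p q r : Z) : cond2 p q r <-> cond_explicit p q r.
Proof. unfold cond2, cond_explicit; lia. Qed.

Lemma cond3_explicit (p q r : Z) : cond3 p q r <-> cond_explicit p q r.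
Proof. unfold cond3, cond_explicit; lia. Qed.

Lemma cond4_explicit (p q r : Z) : cond4 p q r <-> cond_explicit p q r.
Proof. unfold cond4, cond_explicit; lia. Qed.

Theorem proposition5p4 (p q r : Z) :
  (cond1 p q r <-> cond4 p q r) /\
  (cond2 p q r <-> cond4 p q r) /\
  (cond3 p q r <-> cond4 p q r).
Proof.
  rewrite cond1_explicit, cond2_explicit, cond3_explicit, cond4_explicit.
  tauto.
Qed.
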